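(* Fix $q\ge2$ and $z\in\mathbb Z$, and set $k=\lceil\log_q n\rceil+z$ and $\Delta_n=\log_q n-\lceil\log_q n\rceil$. Then $$\lim_{n\to\infty}\frac{a_q(n,k)}{q^n\,e^{-(q-1)q^{\Delta_n-z-1}}}=1.$$
   Context: $\Sigma_q=\{0,\dots,q-1\}$. A vector in $\Sigma_q^n$ is a $k$-RLL vector if $n<k$ or it contains no run of $k$ consecutive zeros; $a_q(n,k)$ is the number of $k$-RLL vectors in $\Sigma_q^n$. *)

From Stdlib Require Import Reals ZArith Arith List.
Import ListNotations.
Open Scope R_scope.

Fixpoint words (q n : nat) : list (list nat) :=
  match n with
  | O => [[]]
  | S m => flat_map (fun w => map (fun a => a :: w) (seq 0 q)) (words q m)
  end.

Definition has_zero_run (k : nat) (w : list nat) : bool :=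
  existsb (fun i => forallb (fun j => Nat.eqb (nth (i + j) w 1%nat) 0) (seq 0 k))
          (seq 0 (length w - k + 1)).

Definition is_RLL (k : Z) (w : list nat) : bool :=
  orb (Z.ltb (Z.of_nat (length w)) k) (negb (has_zero_run (Z.to_nat k) w)).

Definition a_q (q n : nat) (k : Z) : nat :=
  length (filter (is_RLL k) (words q n)).

Definition Rceil (x : R) : Z := (- (up (- x) - 1))%Z.

Definition logq (q : nat) (x : R) : R := ln x / ln (INR q).

From Stdlib Require Import Reals ZArith Arith List Lia Lra.
Import ListNotations.

(* Write f(n) = a_q(n,k) / q^n.  Sorting words by their first letter, a word of
   length n+1 without a run of k zeros is a letter followed by such a word, except
   that a leading 0 is forbidden when the word already starts with exactly k - 1
   zeros; this gives the delayed recurrence f(n+1) = f(n) - c f(n-k) for n >= k,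
   with c = (q-1)/q^(k+1), f = 1 below k and f(k) = 1 - q^-k.  For such a
   recurrence with c k small, f is squeezed between (1-c)^(n-k) and
   (1-q^-k)(1 - c/(1-2ck))^(n-k), so f(n) e^(cn) = 1 + O((1 + cn)/k).  With
   k = ceil(log_q n) + z one has cn = (q-1) q^(Delta_n - z - 1) <= (q-1) q^(-z-1)
   while k grows, which gives the limit. *)

Local Open Scope bool_scope.
Local Open Scope nat_scope.

Definition count_words (q n : nat) (P : list nat -> bool) : nat :=
  length (filter P (words q n)).

Fixpoint lead_zeros (w : list nat) : nat :=
  match w with
  | [] => 0
  | a :: w' => if Nat.eqb a 0 then S (lead_zeros w') else 0
  end.

Lemma forallb_map_comp (A B : Type) (f : B -> bool) (g : A -> B) (s : list A) :
  forallb f (map g s) = forallb (fun x => f (g x)) s.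
Proof. induction s; simpl; congruence. Qed.

Lemma existsb_map_comp (A B : Type) (f : B -> bool) (g : A -> B) (s : list A) :
  existsb f (map g s) = existsb (fun x => f (g x)) s.
Proof. induction s; simpl; congruence. Qed.

Lemma list_sum_map_const (A : Type) (g : A -> nat) (v : nat) (s : list A) :
  (forall a, In a s -> g a = v) -> list_sum (map g s) = length s * v.
Proof.
  induction s as [|a s IH]; simpl; intros Hg; [lia|].
  rewrite Hg, IH by auto. lia.
Qed.

Lemma length_words q n w : In w (words q n) -> length w = n.
Proof.
  revert w; induction n as [|n IH]; simpl; intros w Hw.
  - destruct Hw as [<-|[]]; reflexivity.
  - apply in_flat_map in Hw as [w' [Hw' Hmap]].
    apply in_map_iff in Hmap as [a [<- _]]. simpl. rewrite (IH w'); auto.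
Qed.

Lemma count_words_ext q n (P Q : list nat -> bool) :
  (forall w, P w = Q w) -> count_words q n P = count_words q n Q.
Proof. intros E. unfold count_words. f_equal. apply filter_ext. exact E. Qed.

Lemma count_words_false q n : count_words q n (fun _ => false) = 0.
Proof. unfold count_words. induction (words q n); simpl; auto. Qed.

Lemma count_words_split q n (P Q : list nat -> bool) :
  count_words q n P =
  count_words q n (fun w => P w && Q w) + count_words q n (fun w => P w && negb (Q w)).
Proof.
  unfold count_words. induction (words q n) as [|w l IH]; simpl; auto.
  destruct (P w), (Q w); simpl; rewrite IH; lia.
Qed.

Lemma count_words_cons q n (P Q : list nat -> bool) :
  (forall a w, 1 <= a -> P (a :: w) = Q w) ->
  count_words (S q) (S n) P =
  count_words (S q) n (fun w => P (0 :: w)) + q * count_words (S q) n Q.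
Proof.
  intros HPQ. unfold count_words; cbn [words].
  assert (Hflat : forall s l,
    length (filter P (flat_map (fun w => map (fun a => a :: w) s) l)) =
    list_sum (map (fun a => length (filter (fun w => P (a :: w)) l)) s)).
  { intros s l; induction l as [|w l IH]; simpl.
    - rewrite (list_sum_map_const _ _ 0) by reflexivity; lia.
    - rewrite filter_app, length_app, IH. clear IH.
      induction s as [|a s IHs]; simpl; auto.
      destruct (P (a :: w)); simpl; rewrite <- IHs; lia. }
  rewrite Hflat; cbn [seq]; simpl map; simpl list_sum. f_equal.
  rewrite (list_sum_map_const _ _ (length (filter Q (words (S q) n)))), length_seq; auto.
  intros a Ha. apply in_seq in Ha. f_equal. apply filter_ext. intros w. apply HPQ. lia.
Qed.

Lemma count_words_true q n : count_words (S q) n (fun _ => true) = S q ^ n.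
Proof.
  induction n as [|n IH]; [reflexivity|].
  rewrite (count_words_cons q n _ (fun _ => true)), IH by reflexivity. simpl. lia.
Qed.

Lemma zero_prefix_lead_zeros m w :
  forallb (fun j => Nat.eqb (nth j w 1) 0) (seq 0 m) = Nat.leb m (lead_zeros w).
Proof.
  revert w; induction m as [|m IH]; intros w; simpl; auto.
  rewrite <- seq_shift, forallb_map_comp.
  destruct w as [|a w]; simpl; auto.
  destruct (Nat.eqb a 0); simpl; auto.
Qed.

Lemma lead_zeros_le w : lead_zeros w <= length w.
Proof. induction w as [|a w IH]; simpl; auto. destruct (Nat.eqb a 0); lia. Qed.

Lemma has_zero_run_short k w : length w < k -> has_zero_run k w = false.
Proof.
  intros Hw. unfold has_zero_run. replace (length w - k + 1) with 1 by lia.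
  simpl. rewrite zero_prefix_lead_zeros, Bool.orb_false_r. apply Nat.leb_gt.
  pose proof (lead_zeros_le w). lia.
Qed.

Lemma has_zero_run_cons k a w :
  has_zero_run (S k) (a :: w) =
  (Nat.eqb a 0 && Nat.leb k (lead_zeros w)) || has_zero_run (S k) w.
Proof.
  assert (Hstart : forallb (fun j => Nat.eqb (nth (0 + j) (a :: w) 1) 0) (seq 0 (S k))
                   = Nat.eqb a 0 && Nat.leb k (lead_zeros w)).
  { simpl plus. rewrite zero_prefix_lead_zeros. simpl. destruct (Nat.eqb a 0); auto. }
  unfold has_zero_run at 1; simpl length.
  destruct (le_lt_dec (length w) k) as [Hl|Hl].
  - rewrite (has_zero_run_short (S k) w), Bool.orb_false_r by lia.
    replace (S (length w) - S k + 1) with 1 by lia.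
    simpl seq. cbn [existsb]. rewrite Bool.orb_false_r. exact Hstart.
  - unfold has_zero_run.
    replace (S (length w) - S k + 1) with (S (S (length w - S k))) by lia.
    replace (length w - S k + 1) with (S (length w - S k)) by lia.
    change (seq 0 (S (S (length w - S k)))) with (0 :: seq 1 (S (length w - S k))).
    rewrite <- seq_shift. cbn [existsb]. rewrite existsb_map_comp. f_equal. exact Hstart.
Qed.

Lemma has_zero_run_lead_zeros k w : S k <= lead_zeros w -> has_zero_run (S k) w = true.
Proof.
  revert k; induction w as [|a w IH]; intros k Hk; simpl in Hk; [lia|].
  rewrite has_zero_run_cons. destruct (Nat.eqb a 0); [|lia].
  apply Bool.orb_true_iff; left. apply Nat.leb_le. lia.
Qed.

Section Zero_run_free.

Variables q k : nat.

Definition run_free (n : nat) : nat :=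
  count_words (S q) n (fun w => negb (has_zero_run (S k) w)).

Definition run_free_lead (n t : nat) : nat :=
  count_words (S q) n (fun w => negb (has_zero_run (S k) w) && Nat.eqb (lead_zeros w) t).

Lemma run_free_short n : n <= k -> run_free n = S q ^ n.
Proof.
  intros Hn. unfold run_free. rewrite <- count_words_true. unfold count_words. f_equal.
  apply filter_ext_in. intros w Hw. apply length_words in Hw.
  rewrite has_zero_run_short by lia. reflexivity.
Qed.

Lemma run_free_lead_S_0 n : run_free_lead (S n) 0 = q * run_free n.
Proof.
  unfold run_free_lead. rewrite (count_words_cons q n _ (fun w => negb (has_zero_run (S k) w))).
  - rewrite (count_words_ext _ _ _ (fun _ => false)), count_words_false; [reflexivity|].
    intros w. simpl. rewrite Bool.andb_false_r. reflexivity.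
  - intros [|a] w Ha; [lia|]. rewrite has_zero_run_cons. simpl.
    destruct (has_zero_run (S k) w); reflexivity.
Qed.

Lemma run_free_lead_S_S n t : t < k -> run_free_lead (S n) (S t) = run_free_lead n t.
Proof.
  intros Ht. unfold run_free_lead. rewrite (count_words_cons q n _ (fun _ => false)).
  - rewrite count_words_false, Nat.mul_0_r, Nat.add_0_r.
    apply count_words_ext. intros w. rewrite has_zero_run_cons. simpl.
    destruct (Nat.eqb_spec (lead_zeros w) t) as [->|]; [|rewrite !Bool.andb_false_r; reflexivity].
    replace (Nat.leb k t) with false by (symmetry; apply Nat.leb_gt; lia).
    reflexivity.
  - intros [|a] w Ha; [lia|]. simpl. rewrite Bool.andb_false_r. reflexivity.
Qed.

Lemma run_free_lead_shift m j : j <= k -> run_free_lead (j + m) j = run_free_lead m 0.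
Proof.
  induction j as [|j IH]; intros Hj; [reflexivity|].
  simpl. rewrite run_free_lead_S_S by lia. apply IH. lia.
Qed.

Lemma run_free_lead_max_0 : run_free_lead k k = 1.
Proof.
  pose proof (run_free_lead_shift 0 k (le_n _)) as E.
  rewrite Nat.add_0_r in E. rewrite E. reflexivity.
Qed.

Lemma run_free_lead_max_S p : run_free_lead (k + S p) k = q * run_free p.
Proof. rewrite run_free_lead_shift by lia. apply run_free_lead_S_0. Qed.

(* A run-free word stays run-free under a new leading [0] unless it already
   starts with exactly [k] zeros. *)
Lemma run_free_S n : run_free (S n) + run_free_lead n k = S q * run_free n.
Proof.
  unfold run_free. rewrite (count_words_cons q n _ (fun w => negb (has_zero_run (S k) w))).
  2:{ intros [|a] w Ha; [lia|]. rewrite has_zero_run_cons. reflexivity. }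
  rewrite (count_words_split _ _ (fun w => negb (has_zero_run (S k) w))
             (fun w => Nat.eqb (lead_zeros w) k)).
  fold (run_free_lead n k).
  enough (count_words (S q) n (fun w => negb (has_zero_run (S k) (0 :: w))) =
          count_words (S q) n (fun w => negb (has_zero_run (S k) w) &&
                                        negb (Nat.eqb (lead_zeros w) k))) by lia.
  apply count_words_ext. intros w. rewrite has_zero_run_cons. simpl.
  destruct (has_zero_run (S k) w) eqn:Hrun; simpl; [rewrite Bool.orb_true_r; reflexivity|].
  rewrite Bool.orb_false_r.
  assert (Hle : lead_zeros w <= k).
  { destruct (le_lt_dec (lead_zeros w) k); auto.
    rewrite has_zero_run_lead_zeros in Hrun by lia. discriminate. }
  destruct (Nat.eqb_spec (lead_zeros w) k) as [->|]; [rewrite Nat.leb_refl; reflexivity|].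
  replace (Nat.leb k (lead_zeros w)) with false by (symmetry; apply Nat.leb_gt; lia).
  reflexivity.
Qed.

End Zero_run_free.

Lemma a_q_run_free q k n : a_q (S q) n (Z.of_nat (S k)) = run_free q k n.
Proof.
  unfold a_q, run_free, count_words. f_equal. apply filter_ext. intros w. unfold is_RLL.
  rewrite Nat2Z.id. destruct (Z.ltb_spec (Z.of_nat (length w)) (Z.of_nat (S k))); simpl; auto.
  rewrite has_zero_run_short by lia. reflexivity.
Qed.

Local Open Scope R_scope.

Lemma Rdiv_nonneg a b : 0 <= a -> 0 < b -> 0 <= a / b.
Proof. intros Ha Hb. apply Rmult_le_pos; [exact Ha|left; apply Rinv_0_lt_compat, Hb]. Qed.

Lemma exp_le x y : x <= y -> exp x <= exp y.
Proof. intros [Hxy|<-]; [left; apply exp_increasing, Hxy|lra]. Qed.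

Lemma exp_mul_INR a n : exp a ^ n = exp (INR n * a).
Proof.
  induction n as [|n IH]; simpl pow.
  - rewrite Rmult_0_l, exp_0. reflexivity.
  - rewrite IH, <- exp_plus, S_INR. f_equal. ring.
Qed.

Lemma pow_le_pow_unit a m n : 0 <= a <= 1 -> (m <= n)%nat -> a ^ n <= a ^ m.
Proof.
  intros Ha Hmn. induction Hmn as [|n Hmn IH]; [lra|].
  simpl. pose proof (pow_le a n (proj1 Ha)). nra.
Qed.

Lemma Bernoulli_ineq x m : 0 <= x <= 1 -> 1 - INR m * x <= (1 - x) ^ m.
Proof.
  intros Hx. induction m as [|m IH]; simpl pow; [simpl; lra|].
  rewrite S_INR. pose proof (pos_INR m). nra.
Qed.

Lemma exp_le_1_add_2x y : 0 <= y <= 1/2 -> exp y <= 1 + 2 * y.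
Proof.
  intros Hy. pose proof (exp_ineq1_le (- y)). pose proof (exp_pos y).
  assert (exp y * exp (- y) = 1) by (rewrite <- exp_plus, Rplus_opp_r; apply exp_0).
  nra.
Qed.

(* [1 - d >= exp (- d / (1 - d))] is [exp g >= 1 + g] at [g = d / (1 - d)]. *)
Lemma exp_neg_le_1_sub g : 0 <= g -> exp (- g) * (1 + g) <= 1.
Proof.
  intros Hg. pose proof (exp_ineq1_le g). pose proof (exp_pos (- g)).
  assert (exp g * exp (- g) = 1) by (rewrite <- exp_plus, Rplus_opp_r; apply exp_0).
  nra.
Qed.

Lemma pow_mul_le_of_ratio (f : nat -> R) r p j :
  0 <= r -> (forall n, 0 <= f n) ->
  (forall m, (p <= m < p + j)%nat -> r * f m <= f (S m)) ->
  r ^ j * f p <= f (p + j)%nat.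
Proof.
  intros Hr Hf. induction j as [|j IH]; intros Hstep.
  - rewrite Nat.add_0_r. simpl. lra.
  - rewrite Nat.add_succ_r.
    assert (r ^ j * f p <= f (p + j)%nat) by (apply IH; intros; apply Hstep; lia).
    pose proof (Hstep (p + j)%nat ltac:(lia)). simpl pow. nra.
Qed.

(* [c / (1 - 2 c k - c)] is the exponential decay rate extracted from
   [f_ge_pow] in [f_exp_ge]. *)
Lemma lower_rate_gap c k x :
  0 <= c -> c <= x -> c * k <= x -> x <= 1/6 ->
  c / (1 - 2 * c * k - c) - c <= 6 * x * c.
Proof.
  intros Hc Hcx Hck Hx.
  set (D := 1 - 2 * c * k - c). assert (HD : 1/2 <= D) by (unfold D; lra).
  apply Rmult_le_reg_r with D; [lra|].
  replace ((c / D - c) * D) with (c * (1 - D)) by (field; lra).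
  assert (1 - D <= 3 * x) by (unfold D; lra).
  assert (0 <= x * c) by nra.
  nra.
Qed.

Section Delayed_recurrence.

Variables (f : nat -> R) (k : nat) (c e : R).
Hypotheses (f_before : forall n, (n < k)%nat -> f n = 1)
           (f_at : f k = 1 - e)
           (f_rec : forall p, f (S (k + p)) = f (k + p)%nat - c * f p)
           (f_ge0 : forall n, 0 <= f n)
           (c_ge0 : 0 <= c) (e_ge0 : 0 <= e) (k_ge1 : (1 <= k)%nat).

Lemma f_succ_le n : f (S n) <= f n.
Proof.
  destruct (lt_dec (S n) k).
  { rewrite !f_before by lia. lra. }
  destruct (Nat.eq_dec (S n) k) as [E|E].
  { rewrite E, f_at, (f_before n) by lia. lra. }
  replace n with (k + (n - k))%nat by lia. rewrite f_rec.
  pose proof (f_ge0 (n - k)). nra.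
Qed.

Lemma f_antitone m n : (m <= n)%nat -> f n <= f m.
Proof.
  induction 1 as [|n Hmn IH]; [lra|]. pose proof (f_succ_le n). lra.
Qed.

Lemma f_le_pow n : c <= 1 -> f n <= (1 - c) ^ (n - k).
Proof.
  intros Hc1.
  assert (Hshift : forall p, f (k + p)%nat <= (1 - c) ^ p).
  { induction p as [|p IH].
    - rewrite Nat.add_0_r, f_at. simpl. lra.
    - rewrite Nat.add_succ_r, f_rec.
      pose proof (f_antitone p (k + p) ltac:(lia)). pose proof (f_ge0 (k + p)%nat).
      simpl pow. nra. }
  destruct (lt_dec n k).
  - rewrite f_before by lia. replace (n - k)%nat with 0%nat by lia. simpl. lra.
  - replace n with (k + (n - k))%nat at 1 by lia. apply Hshift.
Qed.

(* By strong induction: the bound on the [k] steps from [p] to [k + p] gives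
   [f (k + p) >= (1 - 2 c)^k f p >= f p / 2], so the loss [c f p] of the next
   step is at most [2 c f (k + p)]. *)
Lemma f_succ_ge n :
  e <= 2 * c -> 2 * c * INR k <= 1/2 -> (1 - 2 * c) * f n <= f (S n).
Proof.
  intros He Hck.
  assert (Hc : c <= 1/4) by (pose proof (le_INR 1 k k_ge1); simpl in *; nra).
  induction n as [n IH] using lt_wf_ind.
  destruct (lt_dec (S n) k).
  { rewrite !f_before by lia. lra. }
  destruct (Nat.eq_dec (S n) k) as [E|E].
  { rewrite E, f_at, (f_before n) by lia. lra. }
  set (p := (n - k)%nat). replace n with (k + p)%nat by lia. rewrite f_rec.
  assert (Hk : (1 - 2 * c) ^ k * f p <= f (p + k)%nat).
  { apply pow_mul_le_of_ratio; auto; [lra|]. intros m Hm. apply IH. lia. }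
  rewrite Nat.add_comm in Hk.
  pose proof (Bernoulli_ineq (2 * c) k ltac:(lra)).
  pose proof (f_ge0 p). pose proof (f_ge0 (k + p)%nat).
  assert (f p <= 2 * f (k + p)%nat) by nra.
  nra.
Qed.

Lemma f_shift_ge p :
  e <= 2 * c -> 2 * c * INR k <= 1/2 -> (1 - 2 * c * INR k) * f p <= f (k + p)%nat.
Proof.
  intros He Hck.
  assert (Hc : c <= 1/4) by (pose proof (le_INR 1 k k_ge1); simpl in *; nra).
  assert (Hk : (1 - 2 * c) ^ k * f p <= f (p + k)%nat).
  { apply pow_mul_le_of_ratio; auto; [lra|]. intros m _. apply f_succ_ge; auto. }
  rewrite Nat.add_comm in Hk.
  pose proof (Bernoulli_ineq (2 * c) k ltac:(lra)). pose proof (f_ge0 p). nra.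
Qed.

Lemma f_ge_pow n :
  e <= 2 * c -> 2 * c * INR k <= 1/2 ->
  (1 - e) * (1 - c / (1 - 2 * c * INR k)) ^ (n - k) <= f n.
Proof.
  intros He Hck.
  assert (Hc : c <= 1/4) by (pose proof (le_INR 1 k k_ge1); simpl in *; nra).
  set (D := 1 - 2 * c * INR k). assert (HD : 1/2 <= D) by (unfold D; lra).
  assert (Hd : 0 <= c / D <= 1/2).
  { split; [apply Rdiv_nonneg; lra|].
    apply Rmult_le_reg_r with D; [lra|]. field_simplify; lra. }
  assert (Hshift : forall p, (1 - e) * (1 - c / D) ^ p <= f (k + p)%nat).
  { induction p as [|p IH].
    - rewrite Nat.add_0_r, f_at. simpl. lra.
    - rewrite Nat.add_succ_r, f_rec.
      pose proof (f_shift_ge p He Hck) as Hsh. fold D in Hsh.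
      assert (c * f p <= c / D * f (k + p)%nat).
      { apply Rmult_le_reg_r with D; [lra|].
        replace (c / D * f (k + p)%nat * D) with (c * f (k + p)%nat) by (field; lra).
        pose proof (f_ge0 p). nra. }
      pose proof (f_ge0 (k + p)%nat). pose proof (pow_le (1 - c / D) p ltac:(lra)).
      assert (0 <= 1 - e) by (pose proof (f_ge0 k); lra).
      simpl pow. nra. }
  destruct (lt_dec n k).
  - rewrite f_before by lia. replace (n - k)%nat with 0%nat by lia. simpl. lra.
  - replace n with (k + (n - k))%nat at 2 by lia. apply Hshift.
Qed.

Section Normalised.

Variables (x M : R) (n : nat).
Hypotheses (ck_le_x : c * INR k <= x) (x_le : x <= 1/6) (e_le_2c : e <= 2 * c)
           (k_ge2 : (2 <= k)%nat) (cn_le_M : c * INR n <= M).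

Lemma c_le_x : c <= x.
Proof. pose proof (le_INR 2 k k_ge2). simpl in *. nra. Qed.

Lemma e_le_x : e <= x.
Proof. pose proof (le_INR 2 k k_ge2). simpl in *. nra. Qed.

Lemma f_exp_le : f n * exp (c * INR n) <= 1 + 2 * x.
Proof.
  pose proof (pos_INR n). pose proof c_le_x.
  pose proof (f_le_pow n ltac:(lra)) as Hf.
  assert (Hpow : (1 - c) ^ (n - k) <= exp (INR (n - k) * - c)).
  { rewrite <- exp_mul_INR. apply pow_incr. pose proof (exp_ineq1_le (- c)). lra. }
  assert (Hsub : INR n - INR k <= INR (n - k)).
  { destruct (le_lt_dec k n) as [Hkn|Hkn].
    - rewrite minus_INR by exact Hkn. lra.
    - replace (n - k)%nat with 0%nat by lia. apply lt_INR in Hkn. simpl. lra. }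
  assert (Hexp : exp (INR (n - k) * - c) * exp (c * INR n) <= exp (c * INR k)).
  { rewrite <- exp_plus. apply exp_le. nra. }
  pose proof (exp_le_1_add_2x (c * INR k) ltac:(pose proof (pos_INR k); nra)).
  pose proof (exp_pos (c * INR n)).
  assert (f n * exp (c * INR n) <= exp (INR (n - k) * - c) * exp (c * INR n))
    by (apply Rmult_le_compat_r; lra).
  lra.
Qed.

Lemma f_exp_ge : 1 - x - 6 * M * x <= f n * exp (c * INR n).
Proof.
  pose proof (pos_INR n). pose proof (pos_INR k). pose proof c_le_x. pose proof e_le_x.
  pose proof (f_ge_pow n e_le_2c ltac:(nra)) as Hf.
  set (D := 1 - 2 * c * INR k) in Hf. assert (HD : 2/3 <= D) by (unfold D; nra).
  set (g := c / (D - c)).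
  assert (Hg0 : 0 <= g) by (apply Rdiv_nonneg; lra).
  assert (Hrate : exp (- g) <= 1 - c / D).
  { pose proof (exp_neg_le_1_sub g Hg0).
    replace (1 - c / D) with (/ (1 + g)) by (unfold g; field; lra).
    apply Rmult_le_reg_r with (1 + g); [lra|]. rewrite Rinv_l by lra. lra. }
  assert (Hpow : exp (INR n * - g) <= (1 - c / D) ^ (n - k)).
  { rewrite <- exp_mul_INR. apply Rle_trans with ((1 - c / D) ^ n).
    - apply pow_incr. pose proof (exp_pos (- g)). lra.
    - apply pow_le_pow_unit; [|lia]. split; [|apply Rmult_le_reg_r with D; field_simplify]; try lra.
      apply Rmult_le_reg_r with D; [lra|]. field_simplify; lra. }
  assert (Hgap : g - c <= 6 * x * c) by (apply lower_rate_gap; lra).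
  assert (Hlin : 1 - 6 * x * M <= exp (- ((g - c) * INR n))).
  { pose proof (exp_ineq1_le (- ((g - c) * INR n))). nra. }
  assert (Hprod : exp (INR n * - g) * exp (c * INR n) = exp (- ((g - c) * INR n))).
  { rewrite <- exp_plus. f_equal. ring. }
  pose proof (exp_pos (c * INR n)). pose proof (exp_pos (INR n * - g)).
  assert ((1 - e) * exp (INR n * - g) * exp (c * INR n) <= f n * exp (c * INR n))
    by (apply Rmult_le_compat_r; nra).
  rewrite Rmult_assoc, Hprod in *.
  assert ((1 - e) * (1 - 6 * x * M) <= (1 - e) * exp (- ((g - c) * INR n)))
    by (apply Rmult_le_compat_l; lra).
  assert (0 <= x) by nra. assert (0 <= M) by nra.
  assert (0 <= e * (6 * x * M)) by (apply Rmult_le_pos; nra).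
  nra.
Qed.

Lemma f_exp_close : Rabs (f n * exp (c * INR n) - 1) <= (3 + 6 * M) * x.
Proof.
  pose proof f_exp_le. pose proof f_exp_ge.
  assert (0 <= x) by (pose proof (pos_INR k); nra).
  assert (0 <= M) by (pose proof (pos_INR n); nra).
  apply Rabs_le. nra.
Qed.

End Normalised.

End Delayed_recurrence.

Definition run_free_ratio (q k n : nat) : R := INR (run_free q k n) / INR (S q) ^ n.

Section Run_free_ratio.

Variables q k : nat.
Let Q := INR (S q).

Lemma INR_S_pow_pos j : 0 < Q ^ j.
Proof. apply pow_lt. unfold Q. apply lt_0_INR. lia. Qed.

Lemma run_free_S_INR n :
  INR (run_free q k (S n)) = Q * INR (run_free q k n) - INR (run_free_lead q k n k).
Proof.
  pose proof (run_free_S q k n) as E. apply (f_equal INR) in E.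
  rewrite plus_INR, mult_INR in E. unfold Q. lra.
Qed.

Lemma run_free_ratio_before n : (n < S k)%nat -> run_free_ratio q k n = 1.
Proof.
  intros Hn. unfold run_free_ratio. rewrite run_free_short, pow_INR by lia.
  apply Rdiv_diag, Rgt_not_eq, INR_S_pow_pos.
Qed.

Lemma run_free_ratio_at : run_free_ratio q k (S k) = 1 - 1 / Q ^ S k.
Proof.
  unfold run_free_ratio. rewrite run_free_S_INR, run_free_lead_max_0, run_free_short, pow_INR
    by lia.
  fold Q. simpl pow. pose proof (INR_S_pow_pos k). pose proof (INR_S_pow_pos 1). simpl in *.
  field. lra.
Qed.

Lemma run_free_ratio_rec p :
  run_free_ratio q k (S (S k + p)) =
  run_free_ratio q k (S k + p) - (Q - 1) / Q ^ S (S k) * run_free_ratio q k p.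
Proof.
  unfold run_free_ratio. rewrite run_free_S_INR.
  replace (S k + p)%nat with (k + S p)%nat at 2 by lia.
  rewrite run_free_lead_max_S, mult_INR. fold Q.
  replace (INR q) with (Q - 1) by (unfold Q; rewrite S_INR; ring).
  simpl pow. rewrite !pow_add. pose proof (INR_S_pow_pos k). pose proof (INR_S_pow_pos p).
  assert (0 < Q) by (unfold Q; apply lt_0_INR; lia).
  field. repeat split; lra.
Qed.

Lemma run_free_ratio_ge0 n : 0 <= run_free_ratio q k n.
Proof. apply Rdiv_nonneg; [apply pos_INR|apply INR_S_pow_pos]. Qed.

End Run_free_ratio.

Lemma sq_le_two_pow k : (k * k <= 2 * 2 ^ k)%nat.
Proof.
  induction k as [|k IH]; [simpl; lia|].
  destruct (Nat.le_gt_cases k 2) as [Hk|Hk].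
  - destruct k as [|[|[|k]]]; simpl; lia.
  - rewrite Nat.pow_succ_r'. nia.
Qed.

Section Run_constants.

Variables (Q : R) (k : nat).
Hypotheses (Q_ge2 : 2 <= Q) (k_ge1 : (1 <= k)%nat).

Lemma run_penalty_le_rate : 1 / Q ^ k <= 2 * ((Q - 1) / Q ^ S k).
Proof.
  pose proof (pow_lt Q k ltac:(lra)). simpl pow.
  apply Rmult_le_reg_r with (Q * Q ^ k); [nra|].
  field_simplify; lra.
Qed.

Lemma rate_mul_run_le : (Q - 1) / Q ^ S k * INR k <= 2 / INR k.
Proof.
  assert (Hk : 1 <= INR k) by (apply (le_INR 1) in k_ge1; exact k_ge1).
  assert (Hsq : INR k * INR k <= 2 * Q ^ k).
  { pose proof (le_INR _ _ (sq_le_two_pow k)) as H2.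
    rewrite !mult_INR, pow_INR in H2. change (INR 2) with 2 in H2.
    pose proof (pow_incr 2 Q k ltac:(lra)). lra. }
  pose proof (pow_lt Q k ltac:(lra)). simpl pow.
  apply Rmult_le_reg_r with (Q * Q ^ k * INR k).
  { apply Rmult_lt_0_compat; [apply Rmult_lt_0_compat|]; lra. }
  field_simplify; [|lra|split; lra].
  assert (Q * (INR k * INR k) <= Q * (2 * Q ^ k)) by (apply Rmult_le_compat_l; lra).
  nra.
Qed.

End Run_constants.

Lemma a_q_ratio_close (q k n : nat) (M : R) :
  (2 <= q)%nat -> (12 <= k)%nat -> (INR q - 1) / INR q ^ S k * INR n <= M ->
  Rabs (INR (a_q q n (Z.of_nat k)) / (INR q ^ n * exp (- ((INR q - 1) / INR q ^ S k * INR n)))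
        - 1) <= (3 + 6 * M) * (2 / INR k).
Proof.
  intros Hq Hk HM.
  destruct q as [|q]; [lia|]. destruct k as [|k]; [lia|].
  assert (HQ : 2 <= INR (S q)) by (apply (le_INR 2) in Hq; exact Hq).
  assert (Hk12 : 12 <= INR (S k)) by (apply (le_INR 12) in Hk; simpl in Hk |- *; lra).
  rewrite a_q_run_free, exp_Ropp.
  replace (INR (run_free q k n) / (INR (S q) ^ n * / exp ((INR (S q) - 1) / INR (S q) ^ S (S k) * INR n)))
    with (run_free_ratio q k n * exp ((INR (S q) - 1) / INR (S q) ^ S (S k) * INR n))
    by (unfold run_free_ratio; field; split; [apply Rgt_not_eq, exp_pos|apply Rgt_not_eq, INR_S_pow_pos]).
  apply (f_exp_close _ (S k) _ (1 / INR (S q) ^ S k)).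
  - apply run_free_ratio_before.
  - apply run_free_ratio_at.
  - apply run_free_ratio_rec.
  - apply run_free_ratio_ge0.
  - apply Rdiv_nonneg; [lra|apply INR_S_pow_pos].
  - apply Rdiv_nonneg; [lra|apply INR_S_pow_pos].
  - lia.
  - apply rate_mul_run_le; [lra|lia].
  - apply Rmult_le_reg_r with (INR (S k)); [lra|]. field_simplify; lra.
  - apply run_penalty_le_rate; lra.
  - lia.
  - exact HM.
Qed.

Lemma Rceil_ge x : x <= IZR (Rceil x).
Proof.
  unfold Rceil. destruct (archimed (- x)) as [H1 H2].
  rewrite opp_IZR, minus_IZR. simpl. lra.
Qed.

Lemma ln_INR_pos q : (2 <= q)%nat -> 0 < ln (INR q).
Proof.
  intros Hq. rewrite <- ln_1. apply ln_increasing; [lra|].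
  apply (le_INR 2) in Hq. simpl in Hq. lra.
Qed.

Lemma Rceil_logq_ge q m n :
  (2 <= q)%nat -> (q ^ m <= n)%nat -> (Z.of_nat m <= Rceil (logq q (INR n)))%Z.
Proof.
  intros Hq Hn. apply le_IZR. rewrite <- INR_IZR_INZ.
  eapply Rle_trans; [|apply Rceil_ge].
  pose proof (ln_INR_pos q Hq).
  assert (HQ : 0 < INR q) by (apply lt_0_INR; lia).
  assert (Hpow : INR q ^ m <= INR n) by (rewrite <- pow_INR; apply le_INR, Hn).
  assert (0 < INR q ^ m) by (apply pow_lt, HQ).
  unfold logq. apply Rmult_le_reg_r with (ln (INR q)); [lra|].
  replace (ln (INR n) / ln (INR q) * ln (INR q)) with (ln (INR n)) by (field; lra).
  rewrite <- ln_pow by lra.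
  destruct Hpow as [Hlt|Heq]; [left; apply ln_increasing; lra|rewrite Heq; lra].
Qed.

Lemma Rpower_logq_sub q n j :
  (2 <= q)%nat -> (0 < n)%nat ->
  Rpower (INR q) (logq q (INR n) - INR j) = INR n / INR q ^ j.
Proof.
  intros Hq Hn. pose proof (ln_INR_pos q Hq).
  assert (HQ : 0 < INR q) by (apply lt_0_INR; lia).
  unfold Rminus. rewrite Rpower_plus, Rpower_Ropp, Rpower_pow by exact HQ.
  unfold Rpower at 1, logq.
  replace (ln (INR n) / ln (INR q) * ln (INR q)) with (ln (INR n)) by (field; lra).
  rewrite exp_ln by (apply lt_0_INR; exact Hn). reflexivity.
Qed.

Lemma run_length_bound_small C eps :
  0 < eps -> exists k0, (12 <= k0)%nat /\ forall k, (k0 <= k)%nat -> C * (2 / INR k) < eps.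
Proof.
  intros Heps. destruct (INR_archimed eps (Rabs C * 2) Heps) as [N HN].
  exists (12 + N)%nat. split; [lia|]. intros k Hk.
  apply le_INR in Hk. rewrite plus_INR in Hk. replace (INR 12) with 12 in Hk by (simpl; ring).
  pose proof (pos_INR N). pose proof (Rle_abs C). pose proof (Rabs_pos C).
  apply Rmult_lt_reg_r with (INR k); [lra|].
  replace (C * (2 / INR k) * INR k) with (C * 2) by (field; lra).
  nra.
Qed.

Theorem theorem1 (q : nat) (z : Z) (hq : (2 <= q)%nat) :
  Un_cv
    (fun n : nat =>
       INR (a_q q n (Rceil (logq q (INR n)) + z)%Z) /
       (INR q ^ n *
        exp (- (INR q - 1) *
             Rpower (INR q)
               ((logq q (INR n) - IZR (Rceil (logq q (INR n)))) - IZR z - 1))))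
    1.
Proof.
  intros eps Heps.
  set (Q := INR q). assert (HQ : 2 <= Q) by (apply (le_INR 2) in hq; exact hq).
  set (M := (Q - 1) * Rpower Q (- IZR z - 1)).
  destruct (run_length_bound_small (3 + 6 * M) eps Heps) as [k0 [Hk0 Hsmall]].
  exists (q ^ Z.to_nat (Z.of_nat k0 - z))%nat. intros n Hn. unfold R_dist.
  pose proof (Rceil_logq_ge _ _ _ hq Hn) as HK.
  set (L := logq q (INR n)) in *. set (K := Rceil L) in *.
  set (k := Z.to_nat (K + z)).
  assert (Ek : (K + z)%Z = Z.of_nat k) by (unfold k; lia).
  assert (Hn0 : (0 < n)%nat) by (pose proof (Nat.pow_nonzero q (Z.to_nat (Z.of_nat k0 - z))); lia).
  assert (Hk0k : (k0 <= k)%nat) by lia.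
  assert (Hexp : L - IZR K - IZR z - 1 = L - INR (S k)).
  { rewrite S_INR, INR_IZR_INZ, <- Ek, plus_IZR. ring. }
  assert (Hrate : (Q - 1) * Rpower Q (L - IZR K - IZR z - 1) = (Q - 1) / Q ^ S k * INR n).
  { rewrite Hexp. unfold Q, L. rewrite Rpower_logq_sub by assumption. fold Q.
    field. apply pow_nonzero. lra. }
  assert (HM : (Q - 1) / Q ^ S k * INR n <= M).
  { rewrite <- Hrate. apply Rmult_le_compat_l; [lra|].
    assert (L <= IZR K) by apply Rceil_ge. apply Rle_Rpower; lra. }
  rewrite Ek, Ropp_mult_distr_l_reverse, Hrate.
  eapply Rle_lt_trans; [apply a_q_ratio_close; [exact hq|lia|exact HM]|apply Hsmall, Hk0k].
Qed.
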